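(* Let $\mathcal{F}:\mathcal{M}(\mathcal{X}\times\mathcal{Y})\to\mathbb{R}\cup\{+\infty\}$ be convex, lower semi-continuous and separably $*$-increasing, and assume there exists $\pi\in\Pi(\mathbb{P},\mathbb{Q})$ with $\mathcal{F}(\pi)<\infty$. Then $$\mathrm{Cost}(\mathbb{P},\mathbb{Q})=\sup_{v\in\mathcal{C}(\mathcal{Y})}\ \inf_{\pi\in\Pi(\mathbb{P})}\mathcal{L}(v,\pi)=\sup_{v\in\mathcal{C}(\mathcal{Y})}\ \inf_{\pi\in\Pi(\mathbb{P})}\left\{\Big[\mathcal{F}(\pi)-\int_{\mathcal{Y}}v(y)\,d\pi(y)\Big]+\int_{\mathcal{Y}}v(y)\,d\mathbb{Q}(y)\right\},$$ where $\pi(y)$ denotes the marginal of $\pi$ on $\mathcal{Y}$.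
   Context: Let $D\ge 1$ and let $\mathcal{X}=\mathcal{Y}\subset\mathbb{R}^D$ be compact; $\mathbb{P}\in\mathcal{P}(\mathcal{X})$, $\mathbb{Q}\in\mathcal{P}(\mathcal{Y})$. For a compact Hausdorff space $\mathcal{S}$, $\mathcal{C}(\mathcal{S})$ is the space of continuous real functions with the sup norm, $\mathcal{M}(\mathcal{S})$ its dual (finite signed Borel measures), and $\mathcal{P}(\mathcal{S})\subset\mathcal{M}(\mathcal{S})$ the Borel probability measures; lower semi-continuity is with respect to the weak-$*$ topology. $\Pi(\mathbb{P})$ is the set of probability measures on $\mathcal{X}\times\mathcal{Y}$ whose first marginal is $\mathbb{P}$, and $\Pi(\mathbb{P},\mathbb{Q})\subset\Pi(\mathbb{P})$ those with marginals $\mathbb{P},\mathbb{Q}$. For $\mathcal{F}:\mathcal{M}(\mathcal{X}\times\mathcal{Y})\to\mathbb{R}\cup\{+\infty\}$ its convex conjugate is $\mathcal{F}^*(h)=\sup_{\pi\in\mathcal{M}(\mathcal{X}\times\mathcal{Y})}\big[\int h\,d\pi-\mathcal{F}(\pi)\big]$ for $h\in\mathcal{C}(\mathcal{X}\times\mathcal{Y})$. For $u\in\mathcal{C}(\mathcal{X}),v\in\mathcal{C}(\mathcal{Y})$, $(u\oplus v)(x,y)=u(x)+v(y)$. $\mathcal{F}$ is separably $*$-increasing if for all $u\in\mathcal{C}(\mathcal{X})$, $v\in\mathcal{C}(\mathcal{Y})$, $c\in\mathcal{C}(\mathcal{X}\times\mathcal{Y})$ with $u\oplus v\le c$ pointwise,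 $\mathcal{F}^*(u\oplus v)\le\mathcal{F}^*(c)$. The general OT cost is $\mathrm{Cost}(\mathbb{P},\mathbb{Q})=\inf_{\pi\in\Pi(\mathbb{P},\mathbb{Q})}\mathcal{F}(\pi)$. For $v\in\mathcal{C}(\mathcal{Y})$ and $\pi\in\Pi(\mathbb{P})$, $\mathcal{L}(v,\pi)=\mathcal{F}(\pi)-\int_{\mathcal{Y}}v\,d\pi_{\mathcal{Y}}+\int_{\mathcal{Y}}v\,d\mathbb{Q}$, where $\pi_{\mathcal{Y}}$ is the second marginal of $\pi$. *)

From HB Require Import structures.
From mathcomp Require Import all_boot all_order all_algebra.
From mathcomp Require Import all_classical all_reals all_analysis.
Set Implicit Arguments. Unset Strict Implicit. Unset Printing Implicit Defensive.
Import Order.TTheory GRing.Theory Num.Theory.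
Import numFieldNormedType.Exports.
Local Open Scope classical_set_scope.
Local Open Scope ring_scope.

Section OTDefs.
Variables (R : realType) (D : nat) (K : set 'rV[R]_D).

(** The compact space X = Y, as the subtype of points of K. *)
Definition pt := {x : 'rV[R]_D | K x}.

(** Continuity of real functions on X and on X x Y (metric subspaces of
    R^D and R^D x R^D, any norm on R^D giving the same topology). *)
Definition contX (f : pt -> R) : Prop :=
  forall (x : pt) (e : R), 0 < e -> exists2 d : R, 0 < d &
    forall y : pt, `|sval x - sval y| < d -> `|f x - f y| < e.

Definition contXY (f : pt * pt -> R) : Prop :=
  forall (z : pt * pt) (e : R), 0 < e -> exists2 d : R, 0 < d &
    forall z' : pt * pt, `|sval z.1 - sval z'.1| < d ->
      `|sval z.2 - sval z'.2| < d -> `|f z - f z'| < e.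

Definition CX := {f : pt -> R | contX f}.
Definition CXY := {f : pt * pt -> R | contXY f}.

Lemma contXY_snd (v : CX) : contXY (fun z => sval v z.2).
Proof.
case: v => v hv /= z e e0; have [d d0 hd] := hv z.2 e e0.
by exists d => // z' _ h2; apply: hd.
Qed.

Lemma contXY_fst (u : CX) : contXY (fun z => sval u z.1).
Proof.
case: u => u hu /= z e e0; have [d d0 hd] := hu z.1 e e0.
by exists d => // z' h1 _; apply: hd.
Qed.

Lemma contXY_oplus (u v : CX) : contXY (fun z => sval u z.1 + sval v z.2).
Proof.
case: u v => u hu [v hv] /= z e e0.
have e20 : 0 < e / 2 by rewrite divr_gt0.
have [d1 d10 hd1] := hu z.1 _ e20; have [d2 d20 hd2] := hv z.2 _ e20.
exists (Num.min d1 d2); first by rewrite lt_min d10 d20.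
move=> z' h1 h2.
have h1' : `|sval z.1 - sval z'.1| < d1.
  by apply: (lt_le_trans h1); rewrite ge_min lexx.
have h2' : `|sval z.2 - sval z'.2| < d2.
  by apply: (lt_le_trans h2); rewrite ge_min lexx orbT.
have := hd1 _ h1'; have := hd2 _ h2' => a b.
rewrite (_ : _ - _ = (u z.1 - u z'.1) + (v z.2 - v z'.2)); last first.
  by rewrite opprD addrACA.
apply: (le_lt_trans (ler_normD _ _)).
by rewrite [e]splitr; apply: ltrD.
Qed.

Definition liftY (v : CX) : CXY := exist _ _ (contXY_snd v).
Definition liftX (u : CX) : CXY := exist _ _ (contXY_fst u).
Definition oplus (u v : CX) : CXY := exist _ _ (contXY_oplus u v).

(** M(X x Y) = C(X x Y)^*: bounded linear functionals on C(X x Y)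
    (identified with finite signed Borel measures by Riesz; the pairing
    pi h is the integral of h against pi). *)
Definition is_measXY (pi : CXY -> R) : Prop :=
  (forall (a : R) (f g h : CXY),
     (forall z, sval h z = a * sval f z + sval g z) -> pi h = a * pi f + pi g)
  /\ exists c : R, forall (f : CXY) (b : R),
     (forall z, `|sval f z| <= b) -> `|pi f| <= c * b.

Definition is_probXY (pi : CXY -> R) : Prop :=
  is_measXY pi
  /\ (forall f : CXY, (forall z, 0 <= sval f z) -> 0 <= pi f)
  /\ (forall f : CXY, (forall z, sval f z = 1) -> pi f = 1).

Definition is_probX (mu : CX -> R) : Prop :=
  (forall (a : R) (f g h : CX),
     (forall x, sval h x = a * sval f x + sval g x) -> mu h = a * mu f + mu g)
  /\ (forall f : CX, (forall x, 0 <= sval f x) -> 0 <= mu f)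
  /\ (forall f : CX, (forall x, sval f x = 1) -> mu f = 1).

Definition PiP (P : CX -> R) : set (CXY -> R) :=
  [set pi | is_probXY pi /\ forall u : CX, pi (liftX u) = P u].
Definition PiPQ (P Q : CX -> R) : set (CXY -> R) :=
  [set pi | PiP P pi /\ forall v : CX, pi (liftY v) = Q v].

Definition never_minfty (F : (CXY -> R) -> \bar R) : Prop :=
  forall pi, is_measXY pi -> F pi != -oo%E.

Definition convexF (F : (CXY -> R) -> \bar R) : Prop :=
  forall (pi1 pi2 : CXY -> R) (t : R), is_measXY pi1 -> is_measXY pi2 ->
    0 <= t <= 1 ->
    (F (fun h => (t * pi1 h + (1 - t) * pi2 h)%R)
      <= t%:E * F pi1 + (1 - t)%R%:E * F pi2)%E.

(** Lower semicontinuity for the weak-* topology sigma(M, C): at every pi,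
    for every real t < F pi there is a basic weak-* neighbourhood of pi
    (finitely many test functions hs, radius e) on which F > t. *)
Definition wstar_lsc (F : (CXY -> R) -> \bar R) : Prop :=
  forall pi, is_measXY pi -> forall t : R, (t%:E < F pi)%E ->
    exists (n : nat) (hs : 'I_n -> CXY) (e : R), 0 < e /\
      forall pi', is_measXY pi' ->
        (forall i, `|pi' (hs i) - pi (hs i)| < e) -> (t%:E < F pi')%E.

Definition conjF (F : (CXY -> R) -> \bar R) (h : CXY) : \bar R :=
  ereal_sup [set ((pi h)%:E - F pi)%E | pi in is_measXY].

Definition sep_star_increasing (F : (CXY -> R) -> \bar R) : Prop :=
  forall (u v : CX) (c : CXY),
    (forall x y : pt, sval u x + sval v y <= sval c (x, y)) ->
    (conjF F (oplus u v) <= conjF F c)%E.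

Definition Cost (F : (CXY -> R) -> \bar R) (P Q : CX -> R) : \bar R :=
  ereal_inf [set F pi | pi in PiPQ P Q].

Definition Lag (F : (CXY -> R) -> \bar R) (Q : CX -> R) (v : CX)
  (pi : CXY -> R) : \bar R :=
  (F pi - (pi (liftY v))%:E + (Q v)%:E)%E.

End OTDefs.

From mathcomp Require Import all_boot all_order all_algebra.
From mathcomp Require Import all_classical all_reals all_analysis.
From mathcomp Require Import lra ring.
Import Order.TTheory GRing.Theory Num.Theory.
Import numFieldNormedType.Exports.
Local Open Scope classical_set_scope.
Local Open Scope ring_scope.
Set Implicit Arguments. Unset Strict Implicit. Unset Printing Implicit Defensive.

(* Weak duality is immediate, since Lag v pi = F pi on Pi(P,Q).  For the
   converse fix t < Cost.  The functionals of Pi(P) with F <= t lie in a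
   compact box of the product space R^C(X x Y) (Tychonoff), their cluster
   points keep F <= t by lower semicontinuity, and none of them has Y-marginal
   Q; so by compactness finitely many test functions g_1, ..., g_n and a
   tolerance e already force F > t as soon as |pi_Y(g_i) - Q(g_i)| < e.
   The set of pairs ((pi_Y(g_i))_i, s) with pi in Pi(P) and F pi <= s is
   convex in R^n x R and lies above t over the e-box around (Q(g_i))_i, so a
   finite-dimensional Hahn-Banach argument (the gauge of a convex
   neighbourhood of 0, dominated extension one coordinate at a time) yields
   lam with t + sum_i lam_i (y_i - Q(g_i)) <= s on that set.  Then
   v = sum_i lam_i g_i gives Lag v pi >= t for every pi in Pi(P). *)

Section FiniteHahnBanach.
Variables (R : realType) (m : nat) (p : ('I_m -> R) -> R).
Hypothesis p_subadd : forall x y, p (x + y) <= p x + p y.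
Hypothesis p_homo : forall (a : R) x, 0 < a -> p (a *: x) <= a * p x.

Definition dotv (lam x : 'I_m -> R) := \sum_i lam i * x i.

Lemma dotvD lam x y : dotv lam (x + y) = dotv lam x + dotv lam y.
Proof. by rewrite /dotv -big_split /=; apply: eq_bigr => i _; rewrite mulrDr. Qed.

Lemma dotvZ lam (a : R) x : dotv lam (a *: x) = a * dotv lam x.
Proof. by rewrite /dotv mulr_sumr; apply: eq_bigr => i _; rewrite mulrCA. Qed.

Definition supported_below (k : nat) (x : 'I_m -> R) :=
  forall i : 'I_m, (k <= i)%N -> x i = 0.

Definition dominated_below (k : nat) (lam : 'I_m -> R) :=
  forall x, supported_below k x -> dotv lam x <= p x.

Definition basis_vec (k : nat) : 'I_m -> R := fun i => if val i == k then 1 else 0.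

Section OneStep.
Variables (k : nat) (lam0 : 'I_m -> R).
Hypothesis lam0_dom : dominated_below k lam0.
Let e := basis_vec k.

Lemma dominated_gap x x' (a b : R) : supported_below k x -> supported_below k x' ->
  0 < a -> 0 < b ->
  (dotv lam0 x - p (x - b *: e)) / b <= (p (x' + a *: e) - dotv lam0 x') / a.
Proof.
move=> sx sx' a0 b0.
have sxx : supported_below k (a *: x + b *: x').
  by move=> i ki; rewrite !fctE sx // sx' // !scaler0 addr0.
have key : a * dotv lam0 x + b * dotv lam0 x' <=
    a * p (x - b *: e) + b * p (x' + a *: e).
  rewrite -!dotvZ -dotvD; apply: (le_trans (lam0_dom sxx)).
  have -> : a *: x + b *: x' = a *: (x - b *: e) + b *: (x' + a *: e).
    by apply/funext => i; rewrite !fctE /GRing.scale /=; ring.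
  by apply: (le_trans (p_subadd _ _)); apply: lerD; apply: p_homo.
by rewrite ler_pdivrMr // mulrAC ler_pdivlMr //; move: key; nra.
Qed.

Lemma dominated_extension_constant : exists c : R,
  forall x (a : R), supported_below k x -> dotv lam0 x + c * a <= p (x + a *: e).
Proof.
pose A := [set z | exists x b, [/\ supported_below k x, 0 < b &
  z = (dotv lam0 x - p (x - b *: e)) / b]].
have sup0 : supported_below k 0 by [].
have hsA : has_sup A.
  split; first by exists ((dotv lam0 0 - p (0 - 1 *: e)) / 1), 0, 1; split.
  exists ((p (0 + 1 *: e) - dotv lam0 0) / 1) => _ [x [b [sx b0 ->]]].
  exact: dominated_gap.
exists (sup A) => x a sx.
case: (ltgtP a 0) => [a_lt0 | a_gt0 | ->].
- have : A ((dotv lam0 x - p (x - (- a) *: e)) / (- a)).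
    by exists x, (- a); split; rewrite ?oppr_gt0.
  move/(sup_upper_bound hsA); rewrite ler_pdivrMr ?oppr_gt0 // scaleNr opprK.
  by nra.
- have : sup A <= (p (x + a *: e) - dotv lam0 x) / a.
    apply: ge_sup; first exact: hsA.1.
    by move=> _ [x' [b [sx' b0 ->]]]; exact: dominated_gap.
  by rewrite ler_pdivlMr //; nra.
- by rewrite mulr0 addr0 scale0r addr0; exact: lam0_dom.
Qed.

End OneStep.

Definition truncate (k : nat) (x : 'I_m -> R) : 'I_m -> R :=
  fun i => if (i < k)%N then x i else 0.

Lemma truncate_supported k x : supported_below k (truncate k x).
Proof. by move=> i ki; rewrite /truncate ltnNge ki. Qed.

Lemma supported_succE k (hk : (k < m)%N) x : supported_below k.+1 x ->
  x = truncate k x + x (Ordinal hk) *: basis_vec k.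
Proof.
move=> sx; apply/funext => i; rewrite !fctE /truncate /basis_vec.
case: ltnP => ik; first by rewrite (ltn_eqF ik) scaler0 addr0.
case: eqP => [ik' | nik]; last first.
  by rewrite scaler0 addr0 sx // ltn_neqAle ik andbT eq_sym; apply/eqP.
by rewrite add0r scaler1; congr x; apply: val_inj.
Qed.

Lemma dotv_basis_vec k (hk : (k < m)%N) lam :
  dotv lam (basis_vec k) = lam (Ordinal hk).
Proof.
rewrite /dotv (bigD1 (Ordinal hk)) //= big1 ?addr0; first by rewrite /basis_vec eqxx mulr1.
move=> i /eqP ni; rewrite /basis_vec; case: eqP => [ik | _]; last by rewrite mulr0.
by case: ni; apply: val_inj.
Qed.

Lemma dotv_truncate k lam lam' x : (forall i : 'I_m, (i < k)%N -> lam i = lam' i) ->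
  dotv lam (truncate k x) = dotv lam' (truncate k x).
Proof.
move=> eql; apply: eq_bigr => i _; rewrite /truncate.
by case: ifP => [ik | _]; rewrite ?mulr0 // eql.
Qed.

Lemma dominated_extension_step k (hk : (k < m)%N) lam0 : dominated_below k lam0 ->
  exists lam, (forall i : 'I_m, (i < k)%N -> lam i = lam0 i) /\
    dominated_below k.+1 lam.
Proof.
move=> dom0; have [c hc] := dominated_extension_constant dom0.
pose lam : 'I_m -> R := fun i => if (i < k)%N then lam0 i else if val i == k then c else 0.
have lam_lt (i : 'I_m) : (i < k)%N -> lam i = lam0 i by rewrite /lam => ->.
exists lam; split=> // x sx.
have xE := supported_succE hk sx; set a := x (Ordinal hk) in xE.
rewrite xE dotvD dotvZ dotv_basis_vec (dotv_truncate _ lam_lt) /lam /= ltnn eqxx.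
by rewrite mulrC; apply/hc/truncate_supported.
Qed.

Lemma dominated_extension k lam0 : (k <= m)%N -> dominated_below k lam0 ->
  exists lam, (forall i : 'I_m, (i < k)%N -> lam i = lam0 i) /\
    forall x, dotv lam x <= p x.
Proof.
move=> km; move: {2}(m - k)%N (erefl (m - k)%N) => d.
elim: d k km lam0 => [|d IH] k km lam0 mk dom0.
  have km' : k = m by apply/eqP; rewrite eqn_leq km -subn_eq0 mk.
  by exists lam0; split=> // x; apply: dom0 => i; rewrite km' leqNgt ltn_ord.
have hk : (k < m)%N by rewrite -subn_gt0 mk.
have [lam1 [eq1 dom1]] := dominated_extension_step hk dom0.
have mk1 : (m - k.+1)%N = d by rewrite subnS mk.
have [lam [eq dom]] := IH k.+1 hk lam1 mk1 dom1.
by exists lam; split=> // i ik; rewrite eq ?eq1 // ltnW.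
Qed.
End FiniteHahnBanach.

Lemma convex_comb_lt (R : realFieldType) (a b c th : R) :
  a < c -> b < c -> 0 <= th <= 1 -> th * a + (1 - th) * b < c.
Proof.
move=> ac bc /andP[th0 th1]; case: (ltrP 0 th) => [thp | th_le0].
  have : th * a < th * c by rewrite ltr_pM2l.
  have : (1 - th) * b <= (1 - th) * c by rewrite ler_wpM2l ?subr_ge0 // ltW.
  lra.
have -> : th = 0 by apply/le_anti/andP.
by rewrite mul0r add0r subr0 mul1r.
Qed.

Section MinkowskiGauge.
Variables (R : realType) (T : Type) (C : set (T -> R)).
Hypothesis C_convex : forall w1 w2 (th : R), C w1 -> C w2 -> 0 <= th <= 1 ->
  C (th *: w1 + (1 - th) *: w2).
Hypothesis C_absorbing : forall w, exists2 th : R, 0 < th & C (th^-1 *: w).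

Definition gauge_set w := [set th : R | 0 < th /\ C (th^-1 *: w)].
Definition gauge w := inf (gauge_set w).

Lemma has_inf_gauge_set w : has_inf (gauge_set w).
Proof.
split; first by have [th th0 Cth] := C_absorbing w; exists th.
by exists 0 => th [/ltW].
Qed.

Lemma gauge_le w th : 0 < th -> C (th^-1 *: w) -> gauge w <= th.
Proof. by move=> th0 Cw; apply: ge_inf; [case: (has_inf_gauge_set w)|]. Qed.

Lemma gauge_ge w b : (forall th, 0 < th -> C (th^-1 *: w) -> b <= th) -> b <= gauge w.
Proof.
move=> lb; apply: lb_le_inf; first by case: (has_inf_gauge_set w).
by move=> th [th0 Cth]; exact: lb.
Qed.

Lemma gaugeD w1 w2 : gauge (w1 + w2) <= gauge w1 + gauge w2.
Proof.
apply/ler_addgt0Pr => eta eta0.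
have eta2 : 0 < eta / 2 by rewrite divr_gt0.
have [th1 [th10 C1] lt1] := inf_adherent eta2 (has_inf_gauge_set w1).
have [th2 [th20 C2] lt2] := inf_adherent eta2 (has_inf_gauge_set w2).
suff : gauge (w1 + w2) <= th1 + th2 by rewrite /gauge in lt1 lt2 *; lra.
have th12 : 0 < th1 + th2 by lra.
apply: gauge_le => //.
have thc : 0 <= th1 / (th1 + th2) <= 1.
  by rewrite divr_ge0 ?ler_pdivrMr /=; lra.
have -> : (th1 + th2)^-1 *: (w1 + w2) = th1 / (th1 + th2) *: (th1^-1 *: w1) +
    (1 - th1 / (th1 + th2)) *: (th2^-1 *: w2).
  have -> : 1 - th1 / (th1 + th2) = th2 / (th1 + th2).
    by rewrite -[1](divff (lt0r_neq0 th12)) -mulrBl addrAC subrr add0r.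
  by rewrite !scalerA scalerDr !(mulrAC _ (th1 + th2)^-1) !mulfV ?mul1r ?gt_eqF.
exact: C_convex.
Qed.

Lemma gaugeZ (a : R) w : 0 < a -> gauge (a *: w) <= a * gauge w.
Proof.
move=> a0; rewrite -ler_pdivrMl //; apply: gauge_ge => th th0 Cth.
rewrite ler_pdivrMl //; apply: gauge_le; first by rewrite mulr_gt0.
by rewrite scalerA invfM mulrAC mulVf ?mul1r ?gt_eqF.
Qed.

End MinkowskiGauge.

Section ConvexSeparation.
Variables (R : realType) (n : nat) (S : ('I_n -> R) -> R -> Prop).
Variables (q : 'I_n -> R) (t s0 e : R).
Hypothesis e_gt0 : 0 < e.
Hypothesis S_convex : forall y1 s1 y2 s2 (th : R), S y1 s1 -> S y2 s2 ->
  0 <= th <= 1 -> S (th *: y1 + (1 - th) *: y2) (th * s1 + (1 - th) * s2).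
Hypothesis S_above : forall y s, S y s -> (forall i, `|y i - q i| < e) -> t < s.
Hypothesis S_q : S q s0.

(* Vectors of R^(1+n) carry the s-coordinate at index ord0.  sep_set is
   (s0 + 1, q) minus the open set S + ((0, +oo) x e-box): a convex
   neighbourhood of 0 avoiding the point (s0 + 1 - t, 0). *)
Definition sep_set : set ('I_n.+1 -> R) := [set w | exists y s (z : 'I_n -> R) r,
  [/\ S y s, forall i, `|z i| < e, 0 < r, w ord0 = s0 + 1 - s - r &
      forall i, w (lift ord0 i) = q i + z i - y i]].

Lemma sep_set_convex w1 w2 (th : R) : sep_set w1 -> sep_set w2 -> 0 <= th <= 1 ->
  sep_set (th *: w1 + (1 - th) *: w2).
Proof.
move=> [y1 [s1 [z1 [r1 [S1 z1e r10 w10 w1l]]]]].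
move=> [y2 [s2 [z2 [r2 [S2 z2e r20 w20 w2l]]]]] th01.
have /andP[th0 th1] := th01.
exists (th *: y1 + (1 - th) *: y2), (th * s1 + (1 - th) * s2),
  (th *: z1 + (1 - th) *: z2), (th * r1 + (1 - th) * r2).
split; first exact: S_convex.
- move=> i; apply: (le_lt_trans (ler_normD _ _)).
  rewrite !fctE !normrM (ger0_norm th0) (@ger0_norm _ (1 - th)) ?subr_ge0 //.
  exact: convex_comb_lt.
- have := @convex_comb_lt _ (- r1) (- r2) 0 th.
  by rewrite !mulrN !oppr_lt0 => /(_ r10 r20 th01); lra.
- by rewrite !fctE w10 w20 /GRing.scale /=; ring.
- by move=> i; rewrite !fctE w1l w2l /GRing.scale /=; ring.
Qed.

Lemma sep_set_absorbing w : exists2 th : R, 0 < th & sep_set (th^-1 *: w).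
Proof.
pose Sw := \sum_i `|w (lift ord0 i)| / e.
have Sw_ge i : `|w (lift ord0 i)| / e <= Sw.
  by rewrite /Sw (bigD1 i) //= lerDl sumr_ge0 // => j _; rewrite divr_ge0 // ltW.
have Sw0 : 0 <= Sw by rewrite sumr_ge0 // => i _; rewrite divr_ge0 // ltW.
pose M := 1 + `|w ord0| + Sw.
have M0 : 0 < M by rewrite /M; have := normr_ge0 (w ord0); lra.
exists M => //; exists q, s0, (fun i => M^-1 * w (lift ord0 i)), (1 - M^-1 * w ord0).
split=> //; rewrite ?fctE /GRing.scale /=.
- move=> i; rewrite normrM ger0_norm ?invr_ge0 ?ltW // mulrC ltr_pdivrMr //.
  have := Sw_ge i; rewrite ler_pdivrMr // => h.
  have : 0 <= e * `|w ord0| by rewrite mulr_ge0 // ltW.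
  rewrite /M mulrDr mulrDr mulr1 [e * Sw]mulrC; have := e_gt0; lra.
- rewrite subr_gt0 mulrC ltr_pdivrMr // mul1r.
  by apply: (le_lt_trans (ler_norm _)); rewrite /M; lra.
- by lra.
- by move=> i; lra.
Qed.

Let kap := s0 - t + 1.

Lemma t_lt_s0 : t < s0.
Proof. by apply: S_above S_q _ => i; rewrite subrr normr0. Qed.

Lemma kap_gt0 : 0 < kap.
Proof. by rewrite /kap; have := t_lt_s0; lra. Qed.

Definition sep_coef0 : 'I_n.+1 -> R := fun j => if j == ord0 then kap^-1 else 0.

Lemma sep_coef0_dominated : dominated_below (gauge sep_set) 1 sep_coef0.
Proof.
move=> x sx.
have -> : dotv sep_coef0 x = kap^-1 * x ord0.
  rewrite /dotv big_ord_recl /sep_coef0 eqxx big1 ?addr0 // => i _.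
  by rewrite eq_sym (negbTE (neq_lift _ _)) mul0r.
apply: (gauge_ge sep_set_absorbing) => th th0 [y [s [z [r [Sy ze r0 w0 wl]]]]].
have yq i : `|y i - q i| < e.
  have := wl i; rewrite !fctE sx // /GRing.scale /= mulr0 => h.
  by rewrite (_ : y i - q i = z i) ?ze //; lra.
have ts := S_above Sy yq; have k0 := kap_gt0.
move: w0; rewrite !fctE /GRing.scale /= => w0.
have x0E : x ord0 = th * (s0 + 1 - s - r) by rewrite -w0 mulrA mulfV ?mul1r ?gt_eqF.
by rewrite mulrC ler_pdivrMr // x0E ler_wpM2l ?ltW // /kap; lra.
Qed.

Lemma convex_separation : exists lam : 'I_n -> R,
  forall y s, S y s -> t + \sum_i lam i * (y i - q i) <= s.
Proof.
have [lam [lam_0 lam_dom]] := dominated_extension (gaugeD sep_set_convex sep_set_absorbing)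
  (gaugeZ sep_set_absorbing) (isT : (1 <= n.+1)%N) sep_coef0_dominated.
have l0 : lam ord0 = kap^-1 by rewrite lam_0 // /sep_coef0 eqxx.
exists (fun i => - kap * lam (lift ord0 i)) => y s Sy; apply/ler_addgt0Pr => r r0.
pose w : 'I_n.+1 -> R := fun j => if unlift ord0 j is Some i then q i - y i
  else s0 + 1 - s - r.
have : dotv lam w <= 1.
  apply: le_trans (lam_dom w) _; apply: (gauge_le sep_set_absorbing) => //.
  rewrite invr1 scale1r; exists y, s, 0, r; split=> //; rewrite /w ?unlift_none //.
    by move=> i; rewrite normr0.
  by move=> i; rewrite liftK addr0.
rewrite /dotv big_ord_recl l0 /w unlift_none.
under eq_bigr => i _ do rewrite liftK.
have -> : \sum_i - kap * lam (lift ord0 i) * (y i - q i) =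
    kap * \sum_(i < n) lam (lift ord0 i) * (q i - y i).
  by rewrite mulr_sumr; apply: eq_bigr => i _; ring.
move=> h; have k0 := kap_gt0.
have := h; rewrite -(ler_pM2l k0) mulrDr mulrA mulfV ?gt_eqF // mul1r mulr1 /kap.
lra.
Qed.

End ConvexSeparation.

Section ContinuousFunctions.
Variables (R : realType) (D : nat) (K : set 'rV[R]_D).

Lemma comb_dist_lt (a e u1 u2 v1 v2 : R) : 0 < e ->
  `|u1 - u2| < e / 2 / (`|a| + 1) -> `|v1 - v2| < e / 2 ->
  `|(a * u1 + v1) - (a * u2 + v2)| < e.
Proof.
move=> e0 hu hv.
rewrite (_ : _ - _ = a * (u1 - u2) + (v1 - v2)); last by ring.
apply: (le_lt_trans (ler_normD _ _)); rewrite normrM.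
have a1 : 0 < `|a| + 1 by have := normr_ge0 a; lra.
have : `|a| * `|u1 - u2| <= (`|a| + 1) * `|u1 - u2| by rewrite ler_wpM2r //; lra.
have : (`|a| + 1) * `|u1 - u2| < e / 2 by rewrite mulrC -ltr_pdivlMr.
lra.
Qed.

Lemma comb_tolerance_gt0 (a e : R) : 0 < e -> 0 < e / 2 / (`|a| + 1).
Proof. by move=> e0; rewrite !divr_gt0 // ltr_pwDr. Qed.

Lemma contX_cst (c : R) : contX (K:=K) (fun _ => c).
Proof. by move=> x e e0; exists 1 => // y _; rewrite subrr normr0. Qed.

Lemma contX_comb (a : R) (f g : pt K -> R) : contX f -> contX g ->
  contX (fun x => a * f x + g x).
Proof.
move=> hf hg x e e0; have e2 : 0 < e / 2 by rewrite divr_gt0.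
have [d1 d10 hd1] := hf x _ (comb_tolerance_gt0 a e0).
have [d2 d20 hd2] := hg x _ e2.
exists (Num.min d1 d2) => [|y]; first by rewrite lt_min d10 d20.
by rewrite lt_min => /andP[y1 y2]; apply: comb_dist_lt; [|apply: hd1|apply: hd2].
Qed.

Lemma contXY_cst (c : R) : contXY (K:=K) (fun _ => c).
Proof. by move=> z e e0; exists 1 => // z' _ _; rewrite subrr normr0. Qed.

Lemma contXY_comb (a : R) (f g : pt K * pt K -> R) : contXY f -> contXY g ->
  contXY (fun z => a * f z + g z).
Proof.
move=> hf hg z e e0; have e2 : 0 < e / 2 by rewrite divr_gt0.
have [d1 d10 hd1] := hf z _ (comb_tolerance_gt0 a e0).
have [d2 d20 hd2] := hg z _ e2.
exists (Num.min d1 d2) => [|z']; first by rewrite lt_min d10 d20.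
rewrite !lt_min => /andP[x1 x2] /andP[y1 y2].
by apply: comb_dist_lt; [|apply: hd1|apply: hd2].
Qed.

Definition cstX (c : R) : CX K := exist _ _ (contX_cst c).
Definition combX (a : R) (f g : CX K) : CX K :=
  exist _ _ (contX_comb a (svalP f) (svalP g)).
Definition cstXY (c : R) : CXY K := exist _ _ (contXY_cst c).
Definition combXY (a : R) (f g : CXY K) : CXY K :=
  exist _ _ (contXY_comb a (svalP f) (svalP g)).

Lemma nbhs_pair (w : 'rV[R]_D * 'rV[R]_D) (d : R) : 0 < d ->
  nbhs w [set w' | `|w.1 - w'.1| < d /\ `|w.2 - w'.2| < d].
Proof.
move=> d0; apply: filterS (nbhsx_ballx w d d0) => -[a b] [/= h1 h2].
by move: h1 h2; rewrite -!ball_normE /ball_ /=.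
Qed.

(* Otherwise the sets {|h| > M} would generate a proper filter on K x K
   without cluster point. *)
Lemma contXY_bounded (h : CXY K) : compact K -> exists M, forall z, `|sval h z| <= M.
Proof.
move=> cK; apply: contrapT => nb.
have unb M : exists z, M < `|sval h z|.
  apply: contrapT => hM; apply: nb; exists M => z; rewrite leNgt; apply/negP => hz.
  by apply: hM; exists z.
pose B (M : R) := [set w : 'rV[R]_D * 'rV[R]_D | exists z : pt K * pt K,
  [/\ sval z.1 = w.1, sval z.2 = w.2 & M < `|sval h z|]].
pose FF := filter_from [set: R] B.
have FFp : ProperFilter FF.
  apply: filter_from_proper => [|i _]; last first.
    by have [z hz] := unb i; exists (sval z.1, sval z.2), z.
  apply: filter_fromT_filter; first by exists 0.
  move=> i j; exists (Num.max i j) => w [z [e1 e2 hz]].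
  by split; exists z; split => //; apply: le_lt_trans hz; rewrite le_max lexx ?orbT.
have FKK : FF (K `*` K).
  by exists 0 => // w [z [e1 e2 _]]; split; [rewrite -e1 | rewrite -e2]; exact: svalP.
have [w [[Kw1 Kw2] cw]] := compact_setX cK cK FFp FKK.
pose zs : pt K * pt K := (exist _ w.1 Kw1, exist _ w.2 Kw2).
have [d d0 hd] := svalP h zs 1 ltr01.
have FB : FF (B (`|sval h zs| + 1)) by exists (`|sval h zs| + 1).
have [w' [[z [e1 e2 hz]] [h1 h2]]] := cw _ _ FB (nbhs_pair w d0).
have := hd z; rewrite /= e1 e2 => /(_ h1 h2) hlt.
have : `|sval h z| <= `|sval h zs| + `|sval h zs - sval h z|.
  rewrite {1}(_ : sval h z = sval h zs - (sval h zs - sval h z)); last by ring.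
  exact: ler_normB.
lra.
Qed.

End ContinuousFunctions.

Section LinearFunctionals.
Variables (R : realType) (D : nat) (K : set 'rV[R]_D).

Definition linX (mu : CX K -> R) := forall (a : R) (f g h : CX K),
  (forall x, sval h x = a * sval f x + sval g x) -> mu h = a * mu f + mu g.
Definition linXY (phi : CXY K -> R) := forall (a : R) (f g h : CXY K),
  (forall z, sval h z = a * sval f z + sval g z) -> phi h = a * phi f + phi g.
Definition posXY (phi : CXY K -> R) :=
  forall f : CXY K, (forall z, 0 <= sval f z) -> 0 <= phi f.
Definition unitalXY (phi : CXY K -> R) :=
  forall f : CXY K, (forall z, sval f z = 1) -> phi f = 1.

Lemma linX_cst0 mu : linX mu -> mu (cstX K 0) = 0.
Proof.
move=> hl; have h x : sval (cstX K 0) x = 1 * sval (cstX K 0) x + sval (cstX K 0) x.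
  by rewrite /= mul1r addr0.
by have := hl _ _ _ _ h; rewrite mul1r -{1}[mu _]addr0 => /addrI.
Qed.

Lemma linX_combination (n : nat) (lam : 'I_n -> R) (g : 'I_n -> CX K) :
  exists v : CX K, forall mu, linX mu -> mu v = \sum_i lam i * mu (g i).
Proof.
elim: n lam g => [|n IH] lam g.
  by exists (cstX K 0) => mu hl; rewrite big_ord0 linX_cst0.
have [v hv] := IH (fun i => lam (lift ord0 i)) (fun i => g (lift ord0 i)).
exists (combX (lam ord0) (g ord0) v) => mu hl.
by rewrite big_ord_recl -hv //; apply: hl.
Qed.

Lemma linX_liftY (pi : CXY K -> R) : linXY pi -> linX (fun v => pi (liftY v)).
Proof. by move=> hl a f g h hh; apply: hl => z /=; apply: hh. Qed.

Lemma is_probX_lin (mu : CX K -> R) : is_probX mu -> linX mu.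
Proof. by case. Qed.

Section PositiveUnital.
Variable phi : CXY K -> R.
Hypotheses (phi_lin : linXY phi) (phi_pos : posXY phi) (phi_unital : unitalXY phi).

Lemma linXY_cst (c : R) : phi (cstXY K c) = c.
Proof.
have phi0 : phi (cstXY K 0) = 0.
  have h z : sval (cstXY K 0) z = 1 * sval (cstXY K 0) z + sval (cstXY K 0) z.
    by rewrite /= mul1r addr0.
  by have := phi_lin h; rewrite mul1r -{1}[phi _]addr0 => /addrI.
have h z : sval (cstXY K c) z = c * sval (cstXY K 1) z + sval (cstXY K 0) z.
  by rewrite /= mulr1 addr0.
by rewrite (phi_lin h) phi_unital // phi0 mulr1 addr0.
Qed.

Lemma posXY_norm_le (f : CXY K) (b : R) :
  (forall z, `|sval f z| <= b) -> `|phi f| <= b.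
Proof.
move=> hb; have hpos (a : R) : a ^+ 2 = 1 -> 0 <= a * phi f + b.
  move=> a2; rewrite -(linXY_cst b) -(phi_lin (f:=f) (h:=combXY a f (cstXY K b))) //.
  apply: phi_pos => z /=; have := hb z; rewrite ler_norml => /andP[].
  by move: a2; rewrite expr2 => a2; nra.
have := hpos 1 (expr1n _ 2); have := hpos (-1) ltac:(by rewrite sqrrN expr1n).
by rewrite ler_norml; lra.
Qed.

End PositiveUnital.

Lemma is_probXYP phi : is_probXY phi <-> [/\ linXY phi, posXY phi & unitalXY phi].
Proof.
split=> [[[hl _] [hp hn]] // | [hl hp hn]].
by split; [split=> //; exists 1 => f b hb; rewrite mul1r; exact: posXY_norm_le|].
Qed.

Lemma is_probXY_mix (p1 p2 : CXY K -> R) (th : R) : 0 <= th <= 1 ->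
  is_probXY p1 -> is_probXY p2 -> is_probXY (fun h => th * p1 h + (1 - th) * p2 h).
Proof.
move=> /andP[th0 th1] /is_probXYP[l1 pos1 n1] /is_probXYP[l2 pos2 n2].
apply/is_probXYP; split.
- by move=> a f g h hh; rewrite (l1 _ _ _ _ hh) (l2 _ _ _ _ hh); ring.
- move=> f hf; have := pos1 _ hf; have := pos2 _ hf => a b.
  by rewrite addr_ge0 // mulr_ge0 // subr_ge0.
- by move=> f hf; rewrite n1 // n2 //; ring.
Qed.

Lemma PiP_mix (P : CX K -> R) (p1 p2 : CXY K -> R) (th : R) : 0 <= th <= 1 ->
  PiP P p1 -> PiP P p2 -> PiP P (fun h => th * p1 h + (1 - th) * p2 h).
Proof.
move=> th01 [pr1 m1] [pr2 m2]; split; first exact: is_probXY_mix.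
by move=> u; rewrite m1 m2; ring.
Qed.

End LinearFunctionals.

Lemma eq0_of_le_scaled (R : realType) (x c : R) :
  (forall d, 0 < d -> `|x| <= c * d) -> x = 0.
Proof.
move=> h; apply/eqP; rewrite -normr_le0; apply/ler_addgt0Pr => e e0.
have c1 : 0 < `|c| + 1 by have := normr_ge0 c; lra.
have := h _ (divr_gt0 e0 c1); rewrite add0r => /le_trans; apply.
rewrite mulrA ler_pdivrMr // [e * _]mulrC ler_wpM2r ?ltW //.
by rewrite (le_lt_trans (ler_norm c)) // ltrDl.
Qed.

Section EvaluationTopology.
Variables (R : realType) (T : Type).
Import ArrowAsProduct.

Lemma nbhs_eval (p : {classic T} -> R) (h : {classic T}) (d : R) : 0 < d ->
  nbhs p [set pi : {classic T} -> R | `|pi h - p h| < d].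
Proof.
move=> d0; have := @proj_continuous {classic T} (fun _ => R) h p _ (nbhsx_ballx (proj h p) d d0).
apply: (@filterS _ _ (@nbhs_filter _ p)) => pi.
by rewrite /= -ball_normE /ball_ /= distrC.
Qed.

Lemma nbhs_eval_finite (p : {classic T} -> R) n (hs : 'I_n -> {classic T}) (d : R) :
  0 < d -> nbhs p [set pi : {classic T} -> R | forall i, `|pi (hs i) - p (hs i)| < d].
Proof.
move=> d0; apply: (@filter_forall _ _ (fun i => [set pi : {classic T} -> R |
  `|pi (hs i) - p (hs i)| < d]) (nbhs p) (@nbhs_filter _ p)) => i.
exact: nbhs_eval.
Qed.

End EvaluationTopology.

Section FiniteReduction.
Variables (R : realType) (D : nat) (K : set 'rV[R]_D).
Import ArrowAsProduct.
(* Functionals on C(X x Y) as points of the product space R^C(X x Y), whose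
   basic neighbourhoods are exactly those used in wstar_lsc. *)
Local Notation Fun := ({classic CXY K} -> R).

Lemma closure_approx (A : set Fun) (p : Fun) (h1 h2 h3 : CXY K) (d : R) :
  closure A p -> 0 < d -> exists2 pi, A pi &
    [/\ `|pi h1 - p h1| < d, `|pi h2 - p h2| < d & `|pi h3 - p h3| < d].
Proof.
move=> Ap d0; have nI := @filterI _ _ (@nbhs_filter _ p).
have N12 := nI _ _ (nbhs_eval p h1 d0) (nbhs_eval p h2 d0).
have [pi [Api [[N1 N2] N3]]] := Ap _ (nI _ _ N12 (nbhs_eval p h3 d0)).
by exists pi.
Qed.

Lemma closure_is_probXY (p : Fun) : closure (@is_probXY R D K) p -> is_probXY p.
Proof.
move=> cl; apply/is_probXYP; split.
- move=> a f g h hh; apply/eqP; rewrite -subr_eq0; apply/eqP.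
  apply: (@eq0_of_le_scaled _ _ (`|a| + 2)) => d d0.
  have [pi /is_probXYP[pl _ _] [Nh Nf Ng]] := closure_approx h f g cl d0.
  rewrite (_ : p h - (a * p f + p g) =
      - (pi h - p h) + a * (pi f - p f) + (pi g - p g)); last by rewrite (pl _ _ _ _ hh); ring.
  rewrite (le_trans (ler_normD _ _)) // (le_trans (lerD (ler_normD _ _) (lexx _))) //.
  rewrite normrN normrM.
  have : `|a| * `|pi f - p f| <= `|a| * d by rewrite ler_wpM2l // ltW.
  lra.
- move=> f hf; rewrite leNgt; apply/negP => pf_lt0.
  have d0 : 0 < - p f by rewrite oppr_gt0.
  have [pi /is_probXYP[_ pp _] [Nf _ _]] := closure_approx f f f cl d0.
  by have := pp _ hf; move: Nf => /ltr_normlW; lra.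
- move=> f hf; apply/eqP; rewrite -subr_eq0; apply/eqP.
  apply: (@eq0_of_le_scaled _ _ 1) => d d0; rewrite mul1r.
  have [pi /is_probXYP[_ _ pn] [Nf _ _]] := closure_approx f f f cl d0.
  by move: Nf; rewrite pn // distrC => /ltW.
Qed.

Lemma closure_PiP (P : CX K -> R) (p : Fun) : closure (PiP P) p -> PiP P p.
Proof.
move=> cl; split.
  by apply: closure_is_probXY; apply: closureS cl => pi [].
move=> u; apply/eqP; rewrite -subr_eq0; apply/eqP.
apply: (@eq0_of_le_scaled _ _ 1) => d d0; rewrite mul1r.
have [pi [_ pu] [Nu _ _]] := closure_approx (liftX u) (liftX u) (liftX u) cl d0.
by move: Nu; rewrite pu distrC => /ltW.
Qed.

Lemma closure_eval_eq (p : Fun) (h : CXY K) (c : R) :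
  (forall d, 0 < d -> closure [set pi : Fun | `|pi h - c| < d] p) -> p h = c.
Proof.
move=> cl; apply/eqP; rewrite -subr_eq0; apply/eqP.
apply: (@eq0_of_le_scaled _ _ 2) => d d0.
have [pi Npi [Nh _ _]] := closure_approx h h h (cl d d0) d0.
rewrite (_ : p h - c = - (pi h - p h) + (pi h - c)); last by ring.
by apply: (le_trans (ler_normD _ _)); rewrite normrN; move: Npi => /=; lra.
Qed.

Lemma closure_sublevel (F : (CXY K -> R) -> \bar R) (t : R) (p : Fun) :
  wstar_lsc F -> is_measXY p ->
  closure [set pi : Fun | is_measXY pi /\ (F pi <= t%:E)%E] p -> (F p <= t%:E)%E.
Proof.
move=> lsc pm cl; rewrite leNgt; apply/negP => tp.
have [n [hs [e [e0 hF]]]] := lsc p pm t tp.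
have [pi [[pim Fpi] Npi]] := cl _ (nbhs_eval_finite p hs e0).
by have := hF pi pim Npi; rewrite ltNge Fpi.
Qed.

Definition near_sublevel (F : (CXY K -> R) -> \bar R) (P Q : CX K -> R) (t : R)
    (j : nat * (nat -> CX K) * R) : set Fun :=
  [set pi | PiP P pi /\ (F pi <= t%:E)%E /\
     forall i, (i < j.1.1)%N -> `|pi (liftY (j.1.2 i)) - Q (j.1.2 i)| < j.2].

Lemma near_sublevel_filter F P Q t :
  Filter (filter_from [set j | 0 < j.2] (near_sublevel F P Q t)).
Proof.
apply: filter_from_filter; first by exists (0%N, fun=> cstX K 0, 1); rewrite /= ltr01.
move=> [[n1 g1] e1] [[n2 g2] e2] /= e10 e20.
exists (n1 + n2, fun i => if (i < n1)%N then g1 i else g2 (i - n1), Num.min e1 e2)%N.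
  by rewrite /= lt_min e10 e20.
move=> pi [Ppi [Fpi near]]; split; split=> //; split=> // i /= lt_i.
  by have := near i (leq_trans lt_i (leq_addr _ _)); rewrite /= lt_i lt_min => /andP[].
have := near (n1 + i)%N; rewrite /= ltn_add2l lt_i ltnNge leq_addr addKn.
by move=> /(_ isT); rewrite lt_min => /andP[].
Qed.

Lemma finite_marginal_reduction F P Q t : compact K -> wstar_lsc F ->
  (t%:E < Cost F P Q)%E ->
  exists n (g : 'I_n -> CX K) (e : R), 0 < e /\ forall pi, PiP P pi ->
    (forall i, `|pi (liftY (g i)) - Q (g i)| < e) -> (t%:E < F pi)%E.
Proof.
move=> cK lsc tC; apply: contrapT => no_reduction.
pose FF := filter_from [set j | 0 < j.2] (near_sublevel F P Q t).
have FFp : ProperFilter FF.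
  apply: filter_from_proper; first exact: near_sublevel_filter.
  move=> [[n g] e] /= e0; apply: contrapT => empty; apply: no_reduction.
  exists n, (fun i => g (val i)), e; split => // pi Ppi near.
  rewrite ltNge; apply/negP => Fpi; apply: empty; exists pi; split=> //; split=> //.
  by move=> i lt_i; exact: (near (Ordinal lt_i)).
have [M hM] := choice (fun h : CXY K => contXY_bounded h cK).
pose box := [set pi : Fun | forall h, `[- M h, M h]%classic (pi h)].
pose j0 : nat * (nat -> CX K) * R := (0%N, fun=> cstX K 0, 1).
have FFbox : FF box.
  exists j0; first exact: ltr01.
  move=> pi [[/is_probXYP[pl pp pn] _] _] h.
  by have := posXY_norm_le pl pp pn (hM h); rewrite /= in_itv /= ler_norml.
have box_compact : compact box := @tychonoff {classic CXY K} (fun _ => R)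
  (fun h => `[- M h, M h]%classic) (fun h => @segment_compact R _ _).
have [p [_ cluster_p]] := box_compact FF FFp FFbox.
have cl j : 0 < j.2 -> closure (near_sublevel F P Q t j) p.
  by move=> j_pos N Np; apply: cluster_p Np; exists j.
have cl0 := cl j0 ltr01.
have pPi : PiP P p by apply: closure_PiP; apply: closureS cl0 => pi [].
have pF : (F p <= t%:E)%E.
  apply: (closure_sublevel lsc pPi.1.1); apply: closureS cl0.
  by move=> pi [[[pm _] _] [Fpi _]].
have pQ v : p (liftY v) = Q v.
  apply: closure_eval_eq => d d0; apply: closureS (cl (1%N, fun=> v, d) d0).
  by move=> pi [_ [_ /(_ 0%N isT)]].
have : (Cost F P Q <= F p)%E by apply: ereal_inf_lbound; exists p.
by move=> /(le_trans)/(_ pF)/(lt_le_trans tC); rewrite ltxx.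
Qed.

End FiniteReduction.

Lemma lee_of_forall_lt (R : realType) (A B : \bar R) :
  (forall t : R, (t%:E < A)%E -> (t%:E <= B)%E) -> (A <= B)%E.
Proof.
case: A => [r| |] H; last by rewrite leNye.
- case: B H => [b| |] H; [|by rewrite leey|].
    rewrite lee_fin; apply/ler_addgt0Pr => e e0.
    have : r - e < r by lra.
    by rewrite -lte_fin => /H; rewrite lee_fin; lra.
  have : r - 1 < r by lra.
  by rewrite -lte_fin => /H; rewrite leeNy_eq.
- case: B H => [b| |] H //; last by have := H 0 (ltry _); rewrite leeNy_eq.
  by have := H (b + 1) (ltry _); rewrite lee_fin => ?; exfalso; lra.
Qed.

Section Duality.
Variables (R : realType) (D : nat) (K : set 'rV[R]_D).
Variables (F : (CXY K -> R) -> \bar R) (P Q : CX K -> R).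

Definition dual_value := ereal_sup
  [set ereal_inf [set Lag F Q v pi | pi in PiP P] | v in [set: CX K]].

Lemma dual_value_le_Cost : (dual_value <= Cost F P Q)%E.
Proof.
apply: ge_ereal_sup => _ [v _ <-]; apply: le_ereal_inf_tmp => _ [pi [Ppi Qpi] <-].
apply: le_trans (ereal_inf_lbound _) _; first by exists pi.
by rewrite /Lag Qpi subeK.
Qed.

Definition marginal_epigraph n (g : 'I_n -> CX K) (y : 'I_n -> R) (s : R) :=
  exists2 pi, PiP P pi & (forall i, y i = pi (liftY (g i))) /\ (F pi <= s%:E)%E.

Lemma marginal_epigraph_convex n (g : 'I_n -> CX K) y1 s1 y2 s2 (th : R) :
  convexF F -> marginal_epigraph g y1 s1 -> marginal_epigraph g y2 s2 ->
  0 <= th <= 1 ->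
  marginal_epigraph g (th *: y1 + (1 - th) *: y2) (th * s1 + (1 - th) * s2).
Proof.
move=> cvx [pi1 P1 [y1E F1]] [pi2 P2 [y2E F2]] th01.
exists (fun h => th * pi1 h + (1 - th) * pi2 h); first exact: PiP_mix.
split; first by move=> i; rewrite !fctE y1E y2E.
apply: le_trans (cvx _ _ _ P1.1.1 P2.1.1 th01) _.
have /andP[th0 th1] := th01.
rewrite (EFinD (th * s1)) (EFinM th s1) (EFinM (1 - th) s2).
by apply: leeD; apply: lee_wpmul2l => //; rewrite lee_fin // subr_ge0.
Qed.

Lemma Lag_inf_ge_of_minorant n (g : 'I_n -> CX K) (lam : 'I_n -> R) (v : CX K) t :
  never_minfty F -> is_probX Q ->
  (forall mu, linX mu -> mu v = \sum_i lam i * mu (g i)) ->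
  (forall y s, marginal_epigraph g y s -> t + \sum_i lam i * (y i - Q (g i)) <= s) ->
  (t%:E <= ereal_inf [set Lag F Q v pi | pi in PiP P])%E.
Proof.
move=> nmi hQ vE minorant; apply: le_ereal_inf_tmp => _ [pi Ppi <-].
have [pl _ _] := (is_probXYP pi).1 Ppi.1.
rewrite /Lag; case Fpi: (F pi) (nmi pi Ppi.1.1) => [s| |] // _; last by rewrite leey.
have epi : marginal_epigraph g (fun i => pi (liftY (g i))) s.
  by exists pi => //; split=> //; rewrite Fpi.
have := minorant _ _ epi.
under eq_bigr do rewrite mulrBr.
rewrite sumrB -(vE _ (linX_liftY pl)) -(vE _ (is_probX_lin hQ)).
by rewrite -EFinB -EFinD lee_fin; lra.
Qed.

Lemma Cost_le_dual_value : compact K -> never_minfty F -> convexF F ->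
  wstar_lsc F -> is_probX Q -> (exists pi, PiPQ P Q pi /\ (F pi < +oo)%E) ->
  (Cost F P Q <= dual_value)%E.
Proof.
move=> cK nmi cvx lsc hQ [pi0 [[P0 Q0] F0]].
apply: lee_of_forall_lt => t tC.
have [n [g [e [e0 reduction]]]] := finite_marginal_reduction cK lsc tC.
have F0fin : F pi0 \is a fin_num by rewrite fin_numE nmi ?lt_eqF //; case: P0 => [[]].
have S_q : marginal_epigraph g (fun i => Q (g i)) (fine (F pi0)).
  by exists pi0 => //; split=> [i|]; rewrite ?Q0 ?fineK.
have S_above y s : marginal_epigraph g y s ->
    (forall i, `|y i - Q (g i)| < e) -> t < s.
  move=> [pi Ppi [yE Fpi]] near; rewrite -lte_fin (lt_le_trans _ Fpi) //.
  by apply: reduction => // i; rewrite -yE.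
have [lam minorant] := convex_separation e0
  (fun y1 s1 y2 s2 th => @marginal_epigraph_convex _ g y1 s1 y2 s2 th cvx) S_above S_q.
have [v vE] := linX_combination lam g.
apply: le_trans (ereal_sup_ubound _); last by exists v.
exact: Lag_inf_ge_of_minorant nmi hQ vE minorant.
Qed.

End Duality.

Theorem theorem1 (R : realType) (D : nat) (K : set 'rV[R]_D)
  (F : (CXY K -> R) -> \bar R) (P Q : CX K -> R) :
  (1 <= D)%N -> compact K ->
  is_probX P -> is_probX Q ->
  never_minfty F -> convexF F -> wstar_lsc F -> sep_star_increasing F ->
  (exists pi, PiPQ P Q pi /\ (F pi < +oo)%E) ->
  Cost F P Q =
    ereal_sup [set ereal_inf [set Lag F Q v pi | pi in PiP P] | v in [set: CX K]]
  /\
  ereal_sup [set ereal_inf [set Lag F Q v pi | pi in PiP P] | v in [set: CX K]]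
  = ereal_sup [set ereal_inf
        [set ((F pi - (pi (liftY v))%:E) + (Q v)%:E)%E | pi in PiP P]
      | v in [set: CX K]].
Proof.
move=> _ cK _ hQ nmi cvx lsc _ feasible; split=> //.
apply/le_anti/andP; split; first exact: Cost_le_dual_value.
exact: dual_value_le_Cost.
Qed.
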